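(* For any $\mathbf A\in\mathbb R^{m\times n}$ and any $\alpha>0$, if $S\sim\mathrm{DPP}(\frac1\alpha\mathbf A^\top\mathbf A)$, then \[ \mathbb E[\mathrm{Er}_{\mathbf A}(S)]=\mathrm{tr}\big(\mathbf A\mathbf A^\top(\mathbf I+\tfrac1\alpha\mathbf A\mathbf A^\top)^{-1}\big)=\mathbb E[|S|]\cdot\alpha. \]
   Context: For $\mathbf A\in\mathbb R^{m\times n}$ with columns $\mathbf a_1,\dots,\mathbf a_n$ and $S\subseteq\{1,\dots,n\}$, $\mathbf P_S$ is the orthogonal projection onto $\mathrm{span}\{\mathbf a_i:i\in S\}$ and $\mathrm{Er}_{\mathbf A}(S)=\|\mathbf A-\mathbf P_S\mathbf A\|_F^2$. For a p.s.d. $n\times n$ matrix $\mathbf K$, $S\sim\mathrm{DPP}(\mathbf K)$ is the distribution over all subsets $S\subseteq\{1,\dots,n\}$ with $\Pr(S)=\det(\mathbf K_{S,S})/\det(\mathbf I+\mathbf K)$, $\mathbf K_{S,S}$ the principal submatrix indexed by $S$ (empty determinant $=1$). *)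

From HB Require Import structures.
From mathcomp Require Import all_boot all_order all_algebra.
Set Implicit Arguments. Unset Strict Implicit. Unset Printing Implicit Defensive.
Import Order.TTheory GRing.Theory Num.Theory.
Local Open Scope ring_scope.

Section Defs.
Variable R : realFieldType.

Definition colsS (m n : nat) (A : 'M[R]_(m, n)) (S : {set 'I_n}) : 'M[R]_(m, #|S|) :=
  \matrix_(i < m, j < #|S|) A i (enum_val j).

(* Orthogonal projection onto span{a_i : i in S}: with B a matrix whose rows
   form a basis of that span, P_S = B^T (B B^T)^{-1} B. *)
Definition projS (m n : nat) (A : 'M[R]_(m, n)) (S : {set 'I_n}) : 'M[R]_m :=
  let B := row_base (colsS A S)^T in
  B^T *m invmx (B *m B^T) *m B.

Definition frob2 (m n : nat) (M : 'M[R]_(m, n)) : R :=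
  \sum_(i < m) \sum_(j < n) M i j ^+ 2.

Definition Er (m n : nat) (A : 'M[R]_(m, n)) (S : {set 'I_n}) : R :=
  frob2 (A - projS A S *m A).

Definition principal (n : nat) (K : 'M[R]_n) (S : {set 'I_n}) : 'M[R]_#|S| :=
  \matrix_(i < #|S|, j < #|S|) K (enum_val i) (enum_val j).

Definition dpp_prob (n : nat) (K : 'M[R]_n) (S : {set 'I_n}) : R :=
  \det (principal K S) / \det (1%:M + K).

Definition dpp_expect (n : nat) (K : 'M[R]_n) (f : {set 'I_n} -> R) : R :=
  \sum_(S : {set 'I_n}) dpp_prob K S * f S.

End Defs.

From HB Require Import structures.
From mathcomp Require Import all_boot all_order all_algebra.
From mathcomp Require Import ring.
Set Implicit Arguments. Unset Strict Implicit. Unset Printing Implicit Defensive.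
Import Order.TTheory GRing.Theory Num.Theory.
Local Open Scope ring_scope.

(* Write K = α⁻¹ AᵀA and a_i for the columns of A.  The principal minors of K
   are Gram determinants: for i ∉ S a unimodular shear replaces a_i by its
   residual a_i - P_S a_i, which is orthogonal to the a_j (j ∈ S), so
   det K_{S+i} = α⁻¹ ‖a_i - P_S a_i‖² det K_S, while the residual vanishes for
   i ∈ S.  Since Er_A(S) = Σ_i ‖a_i - P_S a_i‖², summing over S gives
   E[Er_A(S)] = α E|S|.  Expanding det (X + diag) one diagonal entry at a time
   gives det (I + K) = Σ_S det K_S and Σ_{S ∋ j} det K_S = det (I + K) minus the
   (j, j) cofactor of I + K, hence E|S| = n - tr (I + K)⁻¹.  Finally the
   push-through identity (I + α⁻¹AAᵀ)⁻¹ A = A (I + K)⁻¹ turns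
   tr (AAᵀ (I + α⁻¹AAᵀ)⁻¹) into α (n - tr (I + K)⁻¹). *)

Section Minors.
Variable R : comPzRingType.

Lemma det_sylvester n k (E : 'M[R]_(n, k)) (F : 'M[R]_(k, n)) :
  \det (1%:M + E *m F) = \det (1%:M + F *m E).
Proof.
have lower : block_mx 1%:M (-E) F 1%:M =
    block_mx 1%:M 0 F 1%:M *m block_mx 1%:M (-E) 0 (1%:M + F *m E).
  rewrite mulmx_block ?mul1mx ?mulmx1 ?mul0mx ?mulmx0 ?addr0 ?add0r.
  by rewrite mulmxN addrC addrK.
have upper : block_mx 1%:M (-E) F 1%:M =
    block_mx 1%:M (-E) 0 1%:M *m block_mx (1%:M + E *m F) 0 F 1%:M.
  rewrite mulmx_block ?mul1mx ?mulmx1 ?mul0mx ?mulmx0 ?addr0 ?add0r mulNmx.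
  by rewrite addrK.
have := congr1 determinant lower; rewrite {1}upper !det_mulmx det_ublock.
by rewrite !det_lblock det_ublock !det1 !mul1r !mulr1 => ->.
Qed.

Lemma eq_cofactor n (X Y : 'M[R]_n) (i j : 'I_n) :
  (forall a b, a != i -> b != j -> X a b = Y a b) ->
  cofactor X i j = cofactor Y i j.
Proof.
move=> eqXY; rewrite /cofactor; congr (_ * \det _); apply/matrixP => a b.
by rewrite !mxE; apply: eqXY; rewrite eq_sym neq_lift.
Qed.

Lemma det_add_delta n (X : 'M[R]_n) (i : 'I_n) t :
  \det (X + t *: delta_mx i i) = \det X + t * cofactor X i i.
Proof.
rewrite (expand_det_row _ i) (expand_det_row X i).
have cofE j : cofactor (X + t *: delta_mx i i) i j = cofactor X i j.
  by apply: eq_cofactor => a b /negPf ai _; rewrite !mxE ai mulr0 addr0.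
under eq_bigr do rewrite cofE !mxE eqxx mulrDl.
rewrite big_split /=; congr (_ + _).
rewrite (bigD1 i) //= eqxx mulr1 big1 ?addr0 // => j /negPf ji.
by rewrite ji mulr0 mul0r.
Qed.

Lemma cofactor_unit_row n (X : 'M[R]_n) (i : 'I_n) :
  (forall b, X i b = (i == b)%:R) -> cofactor X i i = \det X.
Proof.
move=> Xi; rewrite (expand_det_row _ i) (bigD1 i) //= big1 ?addr0.
  by rewrite Xi eqxx mul1r.
by move=> j ij; rewrite Xi eq_sym (negPf ij) mul0r.
Qed.

Lemma sum_set_mem n (i : 'I_n) (P : pred {set 'I_n}) (F : {set 'I_n} -> R) :
  \sum_(S | P S && (i \in S)) F S =
  \sum_(S | P (i |: S) && (i \notin S)) F (i |: S).
Proof.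
rewrite (reindex_onto (fun S => i |: S) (fun S => S :\ i)) /=; last first.
  by move=> S /andP[_ iS]; rewrite setD1K.
apply: eq_bigl => S; rewrite setU11 andbT.
congr (_ && _); have [iS | iNS] := boolP (i \in S).
  by apply/negbTE; apply: contraTneq iS => <-; rewrite setD11.
by rewrite setU1K // eqxx.
Qed.

Lemma sum_card_mulr n (F : {set 'I_n} -> R) :
  \sum_(S : {set 'I_n}) #|S|%:R * F S =
  \sum_(j < n) \sum_(S : {set 'I_n} | j \in S) F S.
Proof.
under [RHS]eq_bigr do rewrite big_mkcond /=.
rewrite exchange_big; apply: eq_bigr => S _ /=.
by rewrite -big_mkcond sumr_const mulr_natl.
Qed.

Definition diag_set n (S : {set 'I_n}) : 'M[R]_n :=
  diag_mx (\row_j (j \in S)%:R).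

Lemma diag_setE n (S : {set 'I_n}) a b :
  diag_set S a b = ((a == b) && (a \in S))%:R.
Proof. by rewrite !mxE; case: (a == b); case: (a \in S). Qed.

Lemma trmx_diag_set n (S : {set 'I_n}) : (diag_set S)^T = diag_set S.
Proof. exact: tr_diag_mx. Qed.

Lemma diag_setU1 n (S : {set 'I_n}) i :
  i \notin S -> diag_set (i |: S) = diag_set S + delta_mx i i.
Proof.
move=> iS; apply/matrixP => x y; rewrite !mxE in_setU1.
case: (eqVneq x i) => [-> | xi] /=; last by rewrite addr0.
by rewrite (negPf iS) mul0rn add0r eq_sym.
Qed.

Lemma mul_delta_diag_set0 n (S : {set 'I_n}) i :
  i \notin S -> delta_mx 0 i *m diag_set S = 0 :> 'rV[R]_n.
Proof.
move=> iS; apply/matrixP => x y; rewrite mul_mx_diag !mxE.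
by case: (eqVneq y i) => [-> | yi]; rewrite ?(negPf iS) ?mulr0 ?andbF ?mul0r.
Qed.

Definition restrict_mx n (S : {set 'I_n}) (X : 'M[R]_n) : 'M[R]_n :=
  \matrix_(a, b) if (a \in S) && (b \in S) then X a b else (a == b)%:R.

Lemma restrict_mxT n (X : 'M[R]_n) : restrict_mx setT X = X.
Proof. by apply/matrixP => a b; rewrite mxE !in_setT. Qed.

Lemma restrict_mx0 n (X : 'M[R]_n) : restrict_mx set0 X = 1%:M.
Proof. by apply/matrixP => a b; rewrite !mxE in_set0. Qed.

Lemma restrict_mxI n (S T : {set 'I_n}) (X : 'M[R]_n) :
  restrict_mx S (restrict_mx T X) = restrict_mx (S :&: T) X.
Proof.
apply/matrixP => a b; rewrite !mxE !in_setI.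
by case: (a \in S); case: (b \in S); case: (a \in T); case: (b \in T).
Qed.

Lemma det_add_diag_setC n (T : {set 'I_n}) (X : 'M[R]_n) :
  \det (X + diag_set (~: T)) =
  \sum_(S : {set 'I_n} | T \subset S) \det (restrict_mx S X).
Proof.
move cardT: #|~: T| => k; elim: k T cardT X => [|k IH] T cardT X.
  have {cardT}-> : T = setT by apply: setC_inj; rewrite setCT; apply: cards0_eq.
  have -> : diag_set (~: setT) = 0 :> 'M[R]_n.
    by apply/matrixP => a b; rewrite diag_setE setCT in_set0 andbF mxE.
  by rewrite addr0 (big_pred1 setT) ?restrict_mxT // => S; rewrite subTset.
have /card_gt0P [i] : (0 < #|~: T|)%N by rewrite cardT.
rewrite in_setC => iT.
have cardiT : #|~: (i |: T)| = k.
  move: cardT; rewrite (cardsD1 i) in_setC iT add1n.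
  by rewrite setCU setIC -setDE => -[].
have -> : X + diag_set (~: T) = X + diag_set (~: (i |: T)) + 1 *: delta_mx i i.
  apply/matrixP => a b; rewrite !mxE !in_setC in_setU1 mul1r -addrA.
  congr (_ + _).
  case: (eqVneq a i) => [-> | ai] /=; last by rewrite addr0.
  by rewrite iT mul0rn add0r eq_sym; case: (b == i).
rewrite det_add_delta mul1r.
have -> : cofactor (X + diag_set (~: (i |: T))) i i =
          \det (restrict_mx (~: [set i]) X + diag_set (~: (i |: T))).
  rewrite -(cofactor_unit_row (i := i)); last first.
    by move=> b; rewrite !mxE !in_setC in_set1 in_setU1 eqxx /= mul0rn addr0.
  apply: (eq_cofactor (i := i) (j := i)) => a b ai bi.
  by rewrite !mxE !in_setC !in_set1 (negPf ai) (negPf bi).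
have subiT (S : {set 'I_n}) : (i |: T \subset S) = (T \subset S) && (i \in S).
  by rewrite subUset sub1set andbC.
have subU1 (S : {set 'I_n}) : (T \subset i |: S) = (T \subset S).
  apply/subsetP/subsetP => sub x xT; last by rewrite setU1r ?sub.
  have := sub x xT; rewrite in_setU1 => /predU1P[xi|//].
  by move: iT; rewrite -xi xT.
rewrite !IH // [RHS](bigID (fun S : {set 'I_n} => i \in S)) /=; congr (_ + _).
  by apply: eq_bigl => S; rewrite subiT.
rewrite (eq_bigl _ _ subiT) sum_set_mem; apply: eq_big => [S | S /andP[_ iS]].
  by rewrite subU1.
by rewrite restrict_mxI -setDE setU1K.
Qed.

Lemma det_1D_sum_restrict n (X : 'M[R]_n) :
  \det (1%:M + X) = \sum_(S : {set 'I_n}) \det (restrict_mx S X).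
Proof.
rewrite (eq_bigl (fun S : {set 'I_n} => set0 \subset S)) => [|S];
  last by rewrite sub0set.
rewrite -det_add_diag_setC setC0 addrC; congr (\det (_ + _)).
by apply/matrixP => a b; rewrite diag_setE in_setT andbT mxE.
Qed.

Lemma sum_card_restrict n (X : 'M[R]_n) :
  \sum_(S : {set 'I_n}) #|S|%:R * \det (restrict_mx S X) =
  n%:R * \det (1%:M + X) - \tr (\adj (1%:M + X)).
Proof.
have sum_mem j : \sum_(S : {set 'I_n} | j \in S) \det (restrict_mx S X) =
                 \det (1%:M + X) - cofactor (1%:M + X) j j.
  rewrite (eq_bigl (fun S : {set 'I_n} => [set j] \subset S)) => [|S];
    last by rewrite sub1set.
  set Y := X + diag_set (~: [set j]).
  have -> : 1%:M + X = Y + 1 *: delta_mx j j.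
    apply/matrixP => a b; rewrite !mxE in_setC in_set1 mul1r addrC -addrA.
    case: (eqVneq a j) => [-> | aj] /=; last by rewrite addr0.
    by rewrite mul0rn add0r eq_sym.
  have cofY : cofactor (Y + 1 *: delta_mx j j) j j = cofactor Y j j.
    by apply: eq_cofactor => a b aj _; rewrite !mxE (negPf aj) mulr0 addr0.
  by rewrite det_add_delta mul1r cofY addrK det_add_diag_setC.
rewrite sum_card_mulr; under eq_bigr do rewrite sum_mem.
rewrite sumrB sumr_const card_ord mulr_natl; congr (_ - _).
by apply: eq_bigr => j _; rewrite mxE.
Qed.

Definition incl_mx n (S : {set 'I_n}) : 'M[R]_(n, #|S|) :=
  \matrix_(j, l) (j == enum_val l)%:R.

Lemma mulmx_incl p n (S : {set 'I_n}) (X : 'M[R]_(p, n)) :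
  X *m incl_mx S = \matrix_(k, l) X k (enum_val l).
Proof.
apply/matrixP => k l; rewrite !mxE (bigD1 (enum_val l)) //= !mxE eqxx mulr1.
by rewrite big1 ?addr0 // => j /negPf jl; rewrite !mxE jl mulr0.
Qed.

Lemma trmx_incl_mulmx p n (S : {set 'I_n}) (X : 'M[R]_(n, p)) :
  (incl_mx S)^T *m X = \matrix_(l, k) X (enum_val l) k.
Proof.
apply: trmx_inj; rewrite trmx_mul trmxK mulmx_incl.
by apply/matrixP => k l; rewrite !mxE.
Qed.

Lemma trmx_incl_mul n (S : {set 'I_n}) : (incl_mx S)^T *m incl_mx S = 1%:M.
Proof.
apply/matrixP => k l; rewrite mulmx_incl !mxE eq_sym.
by rewrite (inj_eq enum_val_inj).
Qed.

Lemma incl_mul_trmx n (S : {set 'I_n}) :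
  incl_mx S *m (incl_mx S)^T = diag_set S.
Proof.
apply/matrixP => a b; rewrite diag_setE !mxE.
have [aS | aNS] := boolP (a \in S); last first.
  rewrite andbF big1 // => l _; rewrite !mxE.
  by case: eqP => [a_l | _]; [move: aNS; rewrite a_l enum_valP | rewrite mul0r].
rewrite andbT (bigD1 (enum_rank_in aS a)) //= big1 ?addr0.
  by rewrite !mxE enum_rankK_in // eqxx mul1r eq_sym.
move=> l lNa; rewrite !mxE; case: eqP => [a_l | _]; last by rewrite mul0r.
by case/eqP: lNa; apply: enum_val_inj; rewrite -a_l enum_rankK_in.
Qed.

Lemma diag_set_incl n (S : {set 'I_n}) : diag_set S *m incl_mx S = incl_mx S.
Proof. by rewrite -incl_mul_trmx -mulmxA trmx_incl_mul mulmx1. Qed.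

Lemma restrict_mxE n (S : {set 'I_n}) (X : 'M[R]_n) :
  restrict_mx S X = diag_set S *m X *m diag_set S + (1%:M - diag_set S).
Proof.
apply/matrixP => a b; rewrite mul_mx_diag mul_diag_mx !mxE.
case: (boolP (a \in S)) => aS; case: (boolP (b \in S)) => bS /=;
  rewrite ?mul1r ?mulr1 ?mul0r ?mulr0 ?mul0rn ?subrr ?subr0 ?addr0 ?add0r //.
by case: eqP => // a_b; move: bS; rewrite -a_b aS.
Qed.

Lemma det_restrict_mx n (S : {set 'I_n}) (X : 'M[R]_n) :
  \det (restrict_mx S X) = \det ((incl_mx S)^T *m X *m incl_mx S).
Proof.
have -> : restrict_mx S X = 1%:M + incl_mx S *m
    (((incl_mx S)^T *m X *m incl_mx S - 1%:M) *m (incl_mx S)^T).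
  rewrite restrict_mxE -incl_mul_trmx mulmxBl mul1mx mulmxBr !mulmxA.
  by rewrite addrCA.
by rewrite det_sylvester -mulmxA trmx_incl_mul mulmx1 addrC subrK.
Qed.

Lemma restrict_gram m n (A : 'M[R]_(m, n)) (S : {set 'I_n}) b :
  restrict_mx S (b *: (A^T *m A)) =
  b *: ((A *m diag_set S)^T *m (A *m diag_set S)) + (1%:M - diag_set S).
Proof.
rewrite restrict_mxE trmx_mul trmx_diag_set; congr (_ + _).
by rewrite -!mulmxA -!(scalemxAl, scalemxAr) !mulmxA.
Qed.

Lemma gram_add_orth m n (C : 'M[R]_(m, n)) (r : 'cV[R]_m) (u : 'rV[R]_n) :
  C^T *m r = 0 ->
  (C + r *m u)^T *m (C + r *m u) = C^T *m C + u^T *m (r^T *m r) *m u.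
Proof.
move=> Cr; have rC : r^T *m C = 0.
  by rewrite -[LHS]trmxK trmx_mul trmxK Cr trmx0.
rewrite [(C + _)^T]linearD /= trmx_mul mulmxDl !mulmxDr (mulmxA C^T) Cr.
by rewrite mul0mx addr0 -(mulmxA u^T r^T C) rC mulmx0 add0r !mulmxA.
Qed.

Lemma det_gram_unimodular m n b (C : 'M[R]_(m, n)) (D U : 'M[R]_n) :
  D^T = D -> \det U = 1 -> (1%:M - D) *m U = 1%:M - D ->
  \det (b *: ((C *m U)^T *m (C *m U)) + (1%:M - D)) =
  \det (b *: (C^T *m C) + (1%:M - D)).
Proof.
move=> symD detU DU.
have UD : U^T *m (1%:M - D) = 1%:M - D.
  have symID : (1%:M - D)^T = 1%:M - D by rewrite linearB /= trmx1 symD.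
  by rewrite -symID -trmx_mul DU.
have -> : b *: ((C *m U)^T *m (C *m U)) + (1%:M - D) =
          U^T *m (b *: (C^T *m C) + (1%:M - D)) *m U.
  rewrite mulmxDr mulmxDl UD DU trmx_mul -scalemxAr -scalemxAl !mulmxA.
  by rewrite -(mulmxA _ C).
by rewrite !det_mulmx det_tr detU mul1r mulr1.
Qed.

End Minors.

Arguments diag_set {R n} S.
Arguments incl_mx {R n} S.

Section Projection.
Variable R : realFieldType.

Lemma row_mulmx_tr_eq0 m (w : 'rV[R]_m) : w *m w^T = 0 -> w = 0.
Proof.
move/matrixP/(_ 0 0); rewrite !mxE => ww0.
have sum_sq : \sum_j w 0 j ^+ 2 = 0.
  by rewrite -[RHS]ww0; apply: eq_bigr => j _; rewrite mxE expr2.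
have sq_eq0 k : w 0 k ^+ 2 = 0.
  by apply: (psumr_eq0P _ sum_sq) => // j _; apply: sqr_ge0.
apply/matrixP => i k; rewrite (ord1 i) mxE.
by apply/eqP; rewrite -sqrf_eq0 sq_eq0.
Qed.

Lemma row_free_gram_unit k m (B : 'M[R]_(k, m)) :
  row_free B -> B *m B^T \in unitmx.
Proof.
move=> freeB; rewrite -row_free_unit; apply: inj_row_free => v vBB0.
have : (v *m B) *m (v *m B)^T = 0.
  by rewrite trmx_mul !mulmxA -(mulmxA v) vBB0 mul0mx.
by move/row_mulmx_tr_eq0/eqP; rewrite mulmx_free_eq0 // => /eqP.
Qed.

Variables (m n : nat) (A : 'M[R]_(m, n)) (S : {set 'I_n}).

Lemma trmx_projS : (projS A S)^T = projS A S.
Proof.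
rewrite /projS /=; move: (row_base _) => B.
by rewrite !trmx_mul trmx_inv !trmx_mul trmxK !mulmxA.
Qed.

Lemma projS_colsS : projS A S *m colsS A S = colsS A S.
Proof.
rewrite /projS /=.
have /submxP [W] : ((colsS A S)^T <= row_base (colsS A S)^T)%MS.
  by rewrite eq_row_base.
move: (row_base _) (row_base_free (colsS A S)^T) => B freeB CW.
have BW : B^T *m W^T = colsS A S by rewrite -trmx_mul -CW trmxK.
have : B^T *m invmx (B *m B^T) *m B *m (B^T *m W^T) = B^T *m W^T.
  rewrite !mulmxA -(mulmxA _ B) -(mulmxA _ (B *m B^T)) mulmxA mulmxKV //.
  exact: row_free_gram_unit.
by rewrite BW.
Qed.

Lemma projS_range : exists Y : 'M[R]_(#|S|, m), projS A S = colsS A S *m Y.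
Proof.
rewrite /projS /=; set B := row_base _.
have /submxP [V BV] : (B <= (colsS A S)^T)%MS by rewrite eq_row_base.
by exists (V^T *m invmx (B *m B^T) *m B); rewrite {1}BV trmx_mul trmxK !mulmxA.
Qed.

Lemma colsS_incl : colsS A S = A *m incl_mx S.
Proof. by rewrite mulmx_incl; apply/matrixP => a b; rewrite !mxE. Qed.

Lemma projS_mask : projS A S *m (A *m diag_set S) = A *m diag_set S.
Proof.
by rewrite -incl_mul_trmx !mulmxA -(mulmxA (projS A S)) -colsS_incl projS_colsS.
Qed.

Lemma projS_mask_range (x : 'cV[R]_m) :
  exists2 c, projS A S *m x = A *m diag_set S *m c & diag_set S *m c = c.
Proof.
have [Y ->] := projS_range.
exists (incl_mx S *m (Y *m x)); last by rewrite mulmxA diag_set_incl.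
by rewrite colsS_incl -!mulmxA (mulmxA (diag_set S)) diag_set_incl.
Qed.

End Projection.

Section Residual.
Variables (R : realFieldType) (m n : nat) (A : 'M[R]_(m, n)).

Definition sqresid (S : {set 'I_n}) (i : 'I_n) : R :=
  \sum_(k < m) (A - projS A S *m A) k i ^+ 2.

Lemma Er_sum_sqresid (S : {set 'I_n}) : Er A S = \sum_i sqresid S i.
Proof. by rewrite /Er /frob2 exchange_big. Qed.

Lemma sqresid_ge0 (S : {set 'I_n}) i : 0 <= sqresid S i.
Proof. by apply: sumr_ge0 => k _; apply: sqr_ge0. Qed.

Lemma col_resid (S : {set 'I_n}) i :
  col i (A - projS A S *m A) = col i A - projS A S *m col i A.
Proof. by rewrite !colE mulmxBl mulmxA. Qed.

Lemma sqresid_mem (S : {set 'I_n}) i : i \in S -> sqresid S i = 0.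
Proof.
move=> iS; have Ai : col i A = col i (A *m diag_set S).
  by apply/matrixP => k l; rewrite mul_mx_diag !mxE iS mulr1.
have : col i (A - projS A S *m A) = 0.
  by rewrite col_resid {2}Ai !colE mulmxA projS_mask -!colE -Ai subrr.
move/matrixP => resid_eq0; rewrite /sqresid big1 // => k _.
by have := resid_eq0 k 0; rewrite !mxE => ->; rewrite expr0n.
Qed.

Lemma mask_orth_resid (S : {set 'I_n}) (x : 'cV[R]_m) :
  (A *m diag_set S)^T *m (x - projS A S *m x) = 0.
Proof.
have CP : (A *m diag_set S)^T *m projS A S = (A *m diag_set S)^T.
  by rewrite -[projS A S]trmx_projS -trmx_mul projS_mask.
by rewrite mulmxBr mulmxA CP subrr.
Qed.

Lemma det_restrict_gram_setU1 b (S : {set 'I_n}) i : i \notin S ->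
  \det (restrict_mx (i |: S) (b *: (A^T *m A))) =
  b * sqresid S i * \det (restrict_mx S (b *: (A^T *m A))).
Proof.
move=> iS; pose u : 'rV[R]_n := delta_mx 0 i.
have [c Pc Dc] := projS_mask_range A S (col i A).
set C := A *m diag_set S in Pc; set r := col i A - projS A S *m col i A.
have uc : u *m c = 0 by rewrite -Dc mulmxA mul_delta_diag_set0 ?mul0mx.
have D1 : diag_set (i |: S) = diag_set S + u^T *m u.
  by rewrite diag_setU1 // trmx_delta mul_delta_mx.
have C1 : A *m diag_set (i |: S) = (C + r *m u) *m (1%:M + c *m u).
  have Ai : col i A = C *m c + r by rewrite -Pc /r addrC subrK.
  rewrite D1 [LHS]mulmxDr [in LHS]mulmxA /u trmx_delta -colE Ai.
  rewrite mulmxDr mulmx1 mulmxA (mulmxDl C) -(mulmxA r) uc mulmx0 addr0.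
  by rewrite mulmxDl [RHS]addrAC addrA.
have DU : (1%:M - diag_set (i |: S)) *m (1%:M + c *m u) =
          1%:M - diag_set (i |: S).
  rewrite mulmxDr mulmx1 mulmxA mulmxBl mul1mx D1 (mulmxDl (diag_set S)) Dc.
  by rewrite -(mulmxA _ u) uc mulmx0 addr0 subrr mul0mx addr0.
have rr : r^T *m r = (sqresid S i)%:M.
  rewrite /r -col_resid; apply/matrixP => x y.
  rewrite (ord1 x) (ord1 y) !mxE eqxx mulr1n.
  by apply: eq_bigr => k _; rewrite !mxE expr2.
(* The shear [1 + c u] trades the column [a_i] for its residual [r], which is
   orthogonal to the columns in [S]. *)
rewrite [in LHS]restrict_gram C1 det_gram_unimodular ?trmx_diag_set //;
  last by rewrite det_sylvester uc addr0 det1.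
rewrite gram_add_orth ?mask_orth_resid // rr mul_mx_scalar -scalemxAl.
rewrite diag_setU1 // /u trmx_delta mul_delta_mx; set E := delta_mx i i.
have -> : b *: (C^T *m C + sqresid S i *: E) + (1%:M - (diag_set S + E)) =
          b *: (C^T *m C) + (1%:M - diag_set S) + (b * sqresid S i - 1) *: E.
  by apply/matrixP => x y; rewrite !mxE; ring.
rewrite det_add_delta -restrict_gram cofactor_unit_row; first by ring.
by move=> y; rewrite mxE (negPf iS).
Qed.

End Residual.

Lemma mxtrace_gram_inv (R : comUnitRingType) m n (A : 'M[R]_(m, n)) b :
  1%:M + b *: (A^T *m A) \in unitmx ->
  b * \tr (A *m A^T *m invmx (1%:M + b *: (A *m A^T))) =
  n%:R - \tr (invmx (1%:M + b *: (A^T *m A))).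
Proof.
set X := 1%:M + _; set Y := 1%:M + _ => unitX.
have unitY : Y \in unitmx.
  by rewrite unitmxE /Y scalemxAl det_sylvester -scalemxAr -unitmxE.
have YA : Y *m A = A *m X.
  by rewrite mulmxDl mulmxDr mul1mx mulmx1 -scalemxAl -scalemxAr !mulmxA.
have invYA : invmx Y *m A = A *m invmx X.
  by rewrite -[LHS](mulmxK unitX) -(mulmxA (invmx Y)) -YA mulKmx.
have bAA : b *: (A^T *m A) = X - 1%:M by rewrite addrC addKr.
rewrite -mulmxA mxtrace_mulC -mulmxA invYA mulmxA -mxtraceZ scalemxAl bAA.
by rewrite mulmxBl mulmxV // mul1mx linearB /= mxtrace1.
Qed.

Section GramDpp.
Variables (R : realFieldType) (m n : nat) (A : 'M[R]_(m, n)).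

Lemma det_restrict_gram_ge0 b (S : {set 'I_n}) :
  0 <= b -> 0 <= \det (restrict_mx S (b *: (A^T *m A))).
Proof.
move=> b_ge0; move cardS: #|S| => k; elim: k S cardS => [|k IH] S cardS.
  by rewrite (cards0_eq cardS) restrict_mx0 det1 ler01.
have /card_gt0P [i iS] : (0 < #|S|)%N by rewrite cardS.
rewrite -(setD1K iS) det_restrict_gram_setU1 ?setD11 //.
rewrite !mulr_ge0 ?sqresid_ge0 //.
by apply: IH; move: cardS; rewrite (cardsD1 i) iS => -[].
Qed.

Lemma det_1D_gram_gt0 b : 0 <= b -> 0 < \det (1%:M + b *: (A^T *m A)).
Proof.
move=> b_ge0; rewrite det_1D_sum_restrict (bigD1 set0) //= restrict_mx0 det1.
apply: (lt_le_trans ltr01); rewrite lerDl; apply: sumr_ge0 => S _.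
exact: det_restrict_gram_ge0.
Qed.

End GramDpp.

Lemma dpp_probE (R : realFieldType) n (K : 'M[R]_n) (S : {set 'I_n}) :
  dpp_prob K S = \det (restrict_mx S K) / \det (1%:M + K).
Proof.
rewrite /dpp_prob det_restrict_mx; congr (\det _ / _); apply/matrixP => a b.
by rewrite mulmx_incl trmx_incl_mulmx !mxE.
Qed.

Lemma dpp_expect_card (R : realFieldType) n (K : 'M[R]_n) :
  \det (1%:M + K) != 0 ->
  dpp_expect K (fun S => #|S|%:R) = n%:R - \tr (invmx (1%:M + K)).
Proof.
move=> detK_neq0; have unitK : 1%:M + K \in unitmx by rewrite unitmxE unitfE.
rewrite /dpp_expect; under eq_bigr do rewrite dpp_probE mulrC mulrA.
by rewrite -mulr_suml sum_card_restrict /invmx unitK mxtraceZ; field.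
Qed.

Lemma dpp_expect_Er (R : realFieldType) m n (A : 'M[R]_(m, n)) alpha :
  alpha != 0 ->
  let K := alpha^-1 *: (A^T *m A) in
  dpp_expect K (Er A) = alpha * dpp_expect K (fun S => #|S|%:R).
Proof.
move=> alpha_neq0 K; rewrite /dpp_expect.
have probU1 (S : {set 'I_n}) i : i \notin S ->
    dpp_prob K (i |: S) = alpha^-1 * sqresid A S i * dpp_prob K S.
  by move=> iS; rewrite !dpp_probE det_restrict_gram_setU1 // !mulrA.
under eq_bigr do rewrite Er_sum_sqresid mulr_sumr.
under [in RHS]eq_bigr do rewrite mulrC.
rewrite exchange_big sum_card_mulr mulr_sumr; apply: eq_bigr => i _.
rewrite (bigID (fun S : {set 'I_n} => i \in S)) /= big1 ?add0r => [|S iS];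
  last by rewrite sqresid_mem ?mulr0.
rewrite (sum_set_mem i xpredT) mulr_sumr; apply: eq_big => // S /= iS.
by rewrite probU1 // [alpha * _]mulrA [alpha * _]mulrA mulfV // mul1r mulrC.
Qed.

Theorem lemma6 (R : realFieldType) (m n : nat) (A : 'M[R]_(m, n)) (alpha : R) :
  0 < alpha ->
  let K := alpha^-1 *: (A^T *m A) in
  dpp_expect K (Er A) =
    \tr (A *m A^T *m invmx (1%:M + alpha^-1 *: (A *m A^T))) /\
  \tr (A *m A^T *m invmx (1%:M + alpha^-1 *: (A *m A^T))) =
    dpp_expect K (fun S => #|S|%:R) * alpha.
Proof.
move=> alpha_gt0 K.
have alpha_neq0 : alpha != 0 by rewrite gt_eqF.
have detK_gt0 : 0 < \det (1%:M + K).
  by apply: det_1D_gram_gt0; rewrite invr_ge0 ltW.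
have trace_eq : \tr (A *m A^T *m invmx (1%:M + alpha^-1 *: (A *m A^T))) =
                alpha * (n%:R - \tr (invmx (1%:M + K))).
  rewrite -mxtrace_gram_inv ?mulrA ?divff ?mul1r //.
  by rewrite unitmxE unitfE gt_eqF.
rewrite dpp_expect_Er // dpp_expect_card ?gt_eqF // trace_eq.
by split; last rewrite mulrC.
Qed.
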